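(* Let $U$ be a commutative supertropical monoid, $M:=eU$, $\gamma:M\to N$ a surjective homomorphism onto a bipotent semiring $N$, and $\alpha:U\to V$ a transmission covering $\gamma$. Then $\alpha$ is an h-transmission if and only if the ghost kernel $\mathfrak A_\alpha$ contains the set $\Sigma_0(U,\gamma):=\{x\in\mathcal T(U):\exists x_1\in M,\ x_1<ex,\ \gamma(x_1)=\gamma(ex)\neq0\}$.
   Context: All monoids are commutative. A supertropical monoid is a monoid $(U,\cdot)$ with absorbing element $0$ and distinguished idempotent $e$ with $ex=0\Rightarrow x=0$, together with a total ordering on $M:=eU$, compatible with multiplication and with $0$ least, making $M$ a bipotent semiring (addition $=\max$). $\mathcal T(U):=U\setminus eU$. A transmission $\alpha:U\to V$ is a map with $\alpha(0)=0$, $\alpha(1)=1$, multiplicative, $\alpha(e_U)=e_V$, order-preserving on $eU$; it covers $\gamma$ if its restriction $eU\to eV$ equals $\gamma$ (so $eV=N$). Ghost kernel: $\mathfrak A_\alpha:=\{x\in U:\alpha(x)\in eV\}$. An h-transmission is a transmission such that for all $x,y\in U$: if $ex<ey$ and $\alpha(ex)=\alpha(ey)$, then $\alpha(y)\in eV$. *)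

Set Implicit Arguments.

(** A (commutative) supertropical monoid: a commutative monoid (U,*,1) with
    absorbing element 0, a distinguished idempotent e with  e x = 0 -> x = 0,
    and a total ordering on M := eU, compatible with multiplication and with
    0 least (so that M is a bipotent semiring with addition = max). *)
Record STMonoid := {
  st_car :> Type;
  st_mul : st_car -> st_car -> st_car;
  st_one : st_car;
  st_zero : st_car;
  st_e : st_car;
  st_le : st_car -> st_car -> Prop;   (* the ordering; only relevant on eU *)
  st_mulA : forall x y z, st_mul x (st_mul y z) = st_mul (st_mul x y) z;
  st_mulC : forall x y, st_mul x y = st_mul y x;
  st_mul1 : forall x, st_mul st_one x = x;
  st_mul0 : forall x, st_mul st_zero x = st_zero;
  st_ee : st_mul st_e st_e = st_e;
  st_e_faithful : forall x, st_mul st_e x = st_zero -> x = st_zero;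
  st_le_refl : forall x, (exists y, x = st_mul st_e y) -> st_le x x;
  st_le_antisym : forall x y, (exists a, x = st_mul st_e a) ->
      (exists b, y = st_mul st_e b) -> st_le x y -> st_le y x -> x = y;
  st_le_trans : forall x y z, (exists a, x = st_mul st_e a) ->
      (exists b, y = st_mul st_e b) -> (exists c, z = st_mul st_e c) ->
      st_le x y -> st_le y z -> st_le x z;
  st_le_total : forall x y, (exists a, x = st_mul st_e a) ->
      (exists b, y = st_mul st_e b) -> st_le x y \/ st_le y x;
  st_le_mul : forall x y z, (exists a, x = st_mul st_e a) ->
      (exists b, y = st_mul st_e b) -> (exists c, z = st_mul st_e c) ->
      st_le x y -> st_le (st_mul x z) (st_mul y z);
  st_le0 : forall x, (exists a, x = st_mul st_e a) -> st_le st_zero x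
}.

Section Defs.
Context {U V : STMonoid}.

Definition inM {W : STMonoid} (x : W) : Prop := exists y, x = st_mul W (st_e W) y.

Definition st_lt {W : STMonoid} (x y : W) : Prop := st_le W x y /\ x <> y.

(** z = max(x, y) = x + y in the bipotent semiring eW *)
Definition is_max {W : STMonoid} (x y z : W) : Prop :=
  st_le W x z /\ st_le W y z /\ (z = x \/ z = y).

(** gamma : M = eU -> N = eV, a surjective homomorphism of bipotent semirings
    (here N is already identified with eV, as forced by "alpha covers gamma"). *)
Definition surj_semiring_hom (g : U -> V) : Prop :=
  (forall x, inM x -> inM (g x)) /\
  (forall n, inM n -> exists x, inM x /\ g x = n) /\
  g (st_zero U) = st_zero V /\
  g (st_e U) = st_e V /\
  (forall x y, inM x -> inM y -> g (st_mul U x y) = st_mul V (g x) (g y)) /\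
  (forall x y z, inM x -> inM y -> inM z -> is_max x y z -> is_max (g x) (g y) (g z)).

Definition transmission (a : U -> V) : Prop :=
  a (st_zero U) = st_zero V /\
  a (st_one U) = st_one V /\
  (forall x y, a (st_mul U x y) = st_mul V (a x) (a y)) /\
  a (st_e U) = st_e V /\
  (forall x y, inM x -> inM y -> st_le U x y -> st_le V (a x) (a y)).

Definition covers (a g : U -> V) : Prop := forall x, inM x -> a x = g x.

Definition ghost_kernel (a : U -> V) (x : U) : Prop := inM (a x).

Definition tangible (x : U) : Prop := ~ inM x.

Definition h_transmission (a : U -> V) : Prop :=
  transmission a /\
  forall x y : U,
    st_lt (st_mul U (st_e U) x) (st_mul U (st_e U) y) ->
    a (st_mul U (st_e U) x) = a (st_mul U (st_e U) y) ->
    inM (a y).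

Definition Sigma0 (g : U -> V) (x : U) : Prop :=
  tangible x /\
  exists x1 : U, inM x1 /\ st_lt x1 (st_mul U (st_e U) x) /\
    g x1 = g (st_mul U (st_e U) x) /\ g (st_mul U (st_e U) x) <> st_zero V.

End Defs.

From Stdlib Require Import Classical.

(* If [ex < ey] with [alpha (ex) = alpha (ey)], then either [y] is already a
   ghost, or [alpha (ey) = 0] (and then [alpha y] is the ghost [0]), or [y] is
   tangible with [gamma (ey) <> 0], i.e. [y] lies in [Sigma0] with witness [ex].
   Conversely every element of [Sigma0] is of the form [y] above with [x := x1]. *)

Section GhostPart.
Context {W : STMonoid}.

Lemma inM_e_mul (x : W) : inM (st_mul W (st_e W) x).
Proof. exists x; reflexivity. Qed.

Lemma inM_zero : inM (st_zero W).
Proof. exists (st_zero W); rewrite st_mulC, st_mul0; reflexivity. Qed.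

Lemma e_mul_inM {x : W} : inM x -> st_mul W (st_e W) x = x.
Proof. intros [b ->]; rewrite st_mulA, st_ee; reflexivity. Qed.

End GhostPart.

Section Transmission.
Context {U V : STMonoid}.
Context {alpha : U -> V}.
Hypothesis Halpha : transmission alpha.

Lemma transmission_e_mul (x : U) :
  alpha (st_mul U (st_e U) x) = st_mul V (st_e V) (alpha x).
Proof.
  destruct Halpha as [_ [_ [Hmul [He _]]]].
  rewrite Hmul, He; reflexivity.
Qed.

Lemma transmission_inM {x : U} : inM x -> inM (alpha x).
Proof. intros [b ->]; rewrite transmission_e_mul; apply inM_e_mul. Qed.

Lemma transmission_ghost_of_e_mul_zero {y : U} :
  alpha (st_mul U (st_e U) y) = st_zero V -> inM (alpha y).
Proof.
  rewrite transmission_e_mul; intros Hzero.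
  rewrite (st_e_faithful _ _ Hzero); apply inM_zero.
Qed.

Context {gamma : U -> V}.
Hypothesis Hcov : covers alpha gamma.

Lemma h_transmission_ghost_Sigma0 :
  h_transmission alpha -> forall x : U, Sigma0 gamma x -> ghost_kernel alpha x.
Proof.
  intros [_ Hh] x [_ [x1 [Hx1 [Hlt [Heq _]]]]].
  apply (Hh x1 x); rewrite (e_mul_inM Hx1).
  - exact Hlt.
  - rewrite (Hcov _ Hx1), (Hcov _ (inM_e_mul x)); exact Heq.
Qed.

Lemma ghost_Sigma0_h_transmission :
  (forall x : U, Sigma0 gamma x -> ghost_kernel alpha x) -> h_transmission alpha.
Proof.
  intros Hker; split; [exact Halpha |].
  intros x y Hlt Heq.
  destruct (classic (inM y)) as [Hy | Htan]; [exact (transmission_inM Hy) |].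
  destruct (classic (gamma (st_mul U (st_e U) y) = st_zero V)) as [Hzero | Hnz].
  - rewrite <- (Hcov _ (inM_e_mul y)) in Hzero.
    exact (transmission_ghost_of_e_mul_zero Hzero).
  - apply Hker; split; [exact Htan |].
    exists (st_mul U (st_e U) x).
    split; [apply inM_e_mul | split; [exact Hlt | split; [| exact Hnz]]].
    rewrite <- (Hcov _ (inM_e_mul x)), <- (Hcov _ (inM_e_mul y)); exact Heq.
Qed.

End Transmission.

Theorem proposition5p8 (U V : STMonoid) (gamma alpha : U -> V) :
  surj_semiring_hom gamma ->
  transmission alpha ->
  covers alpha gamma ->
  (h_transmission alpha <->
   (forall x : U, Sigma0 gamma x -> ghost_kernel alpha x)).
Proof.
  intros _ Halpha Hcov; split.
  - exact (h_transmission_ghost_Sigma0 Hcov).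
  - exact (ghost_Sigma0_h_transmission Halpha Hcov).
Qed.
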